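(* The Veech homomorphism $V\colon \mathrm{Aff}(S_E)\to GL(2,\mathbb R)$, $\Psi\mapsto D\Psi$, is injective. Moreover, $\mathrm{Aff}(S_E)$ is generated by the three affine automorphisms $\Psi_\alpha,\Psi_\beta,\Psi_\gamma$ whose derivatives are $$\alpha=\begin{pmatrix}1&0\\0&-1\end{pmatrix},\qquad \beta=\begin{pmatrix}\tfrac12&\tfrac{\sqrt3}{2}\\ \tfrac{\sqrt3}{2}&-\tfrac12\end{pmatrix},\qquad \gamma=\begin{pmatrix}-1&2\sqrt3\\0&1\end{pmatrix}.$$ Consequently the Veech group $V(S_E)$ is generated by $\alpha,\beta,\gamma$.
   Context: Let $E$ be the regular hexagon of side length $1$, centred at the origin, with two horizontal sides. Gluing each pair of opposite parallel sides by the translation identifying them gives a translation surface $S_E$: a flat torus carrying two marked points, namely the two equivalence classes of vertices of $E$; let $\Sigma$ denote the set of these two marked points. An affine automorphism of $S_E$ is a homeomorphism $\Psi\colon S_E\to S_E$ such that: - $\Psi(\Sigma)=\Sigma$; - on $S_E\setminus\Sigma$, $\Psi$ is a diffeomorphism whose derivative, computed in the translation charts, is a constant matrix $D\Psi\in GL(2,\mathbb R)$. Orientation-reversing affine automorphisms are allowed. They form a group $\mathrm{Aff}(S_E)$. The Veech group $V(S_E)$ is the image of $\mathrm{Aff}(S_E)$ under $\Psi\mapsto D\Psi$; it is contained in the group of real $2\times 2$ matrices of determinant $\pm1$. *)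

From Stdlib Require Import Reals ZArith List.
Open Scope R_scope.

Definition pt : Type := (R * R)%type.
Definition padd (u v : pt) : pt := (fst u + fst v, snd u + snd v).
Definition psub (u v : pt) : pt := (fst u - fst v, snd u - snd v).
Definition pscale (k : R) (u : pt) : pt := (k * fst u, k * snd u).
Definition pnorm (u : pt) : R := sqrt (fst u ^ 2 + snd u ^ 2).

Record mat2 : Type := Mat2 { m11 : R; m12 : R; m21 : R; m22 : R }.
Definition mat_apply (A : mat2) (u : pt) : pt :=
  (m11 A * fst u + m12 A * snd u, m21 A * fst u + m22 A * snd u).
Definition mat_mul (A B : mat2) : mat2 :=
  Mat2 (m11 A * m11 B + m12 A * m21 B) (m11 A * m12 B + m12 A * m22 B)
       (m21 A * m11 B + m22 A * m21 B) (m21 A * m12 B + m22 A * m22 B).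
Definition mat_id : mat2 := Mat2 1 0 0 1.
Definition mat_det (A : mat2) : R := m11 A * m22 A - m12 A * m21 A.

Definition hex_vertices : list pt :=
  (1, 0) :: (1/2, sqrt 3 / 2) :: (-1/2, sqrt 3 / 2) :: (-1, 0)
  :: (-1/2, - (sqrt 3 / 2)) :: (1/2, - (sqrt 3 / 2)) :: nil.

(** Translations identifying the three pairs of opposite parallel sides. *)
Definition glue1 : pt := (0, sqrt 3).
Definition glue2 : pt := (3/2, sqrt 3 / 2).
Definition glue3 : pt := (3/2, - (sqrt 3 / 2)).

Definition in_lattice (v : pt) : Prop :=
  exists a b c : Z,
    v = padd (pscale (IZR a) glue1) (padd (pscale (IZR b) glue2) (pscale (IZR c) glue3)).

(** S_E = E / gluing = R^2 / Lambda; points of S_E are represented by points of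
    R^2, and two representatives give the same point of S_E iff [equiv]. *)
Definition equiv (x y : pt) : Prop := in_lattice (psub x y).

Definition is_marked (x : pt) : Prop := exists w, In w hex_vertices /\ equiv x w.

Definition respects (F : pt -> pt) : Prop := forall x y, equiv x y -> equiv (F x) (F y).

Definition map_eq (F G : pt -> pt) : Prop := forall x, equiv (F x) (G x).

Definition near (u v : pt) (eps : R) : Prop :=
  exists l, in_lattice l /\ pnorm (psub (psub u v) l) < eps.

(** Continuity of a map of S_E (quotient topology = flat metric topology). *)
Definition quot_continuous (F : pt -> pt) : Prop :=
  forall x eps, 0 < eps -> exists delta, 0 < delta /\
    forall y, pnorm (psub y x) < delta -> near (F y) (F x) eps.

Definition is_homeo (F : pt -> pt) : Prop :=
  respects F /\ quot_continuous F /\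
  exists G, respects G /\ quot_continuous G /\
    map_eq (fun x => G (F x)) (fun x => x) /\ map_eq (fun x => F (G x)) (fun x => x).

(** In translation charts around any non-marked point, F is affine with linear
    part A, i.e. F is smooth there with constant derivative A. *)
Definition locally_affine_off_marked (F : pt -> pt) (A : mat2) : Prop :=
  forall x, ~ is_marked x ->
    exists delta c, 0 < delta /\
      forall y, pnorm (psub y x) < delta -> equiv (F y) (padd (mat_apply A y) c).

Definition is_affine_aut (F : pt -> pt) (A : mat2) : Prop :=
  is_homeo F /\
  (forall x, is_marked (F x) <-> is_marked x) /\
  mat_det A <> 0 /\
  locally_affine_off_marked F A.

Inductive aff_gen (f1 f2 f3 : pt -> pt) : (pt -> pt) -> Prop :=
| ag_1 : aff_gen f1 f2 f3 f1
| ag_2 : aff_gen f1 f2 f3 f2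
| ag_3 : aff_gen f1 f2 f3 f3
| ag_id : aff_gen f1 f2 f3 (fun x => x)
| ag_comp : forall f g, aff_gen f1 f2 f3 f -> aff_gen f1 f2 f3 g ->
    aff_gen f1 f2 f3 (fun x => f (g x))
| ag_inv : forall f g, aff_gen f1 f2 f3 f ->
    map_eq (fun x => g (f x)) (fun x => x) -> map_eq (fun x => f (g x)) (fun x => x) ->
    aff_gen f1 f2 f3 g
| ag_eq : forall f g, aff_gen f1 f2 f3 f -> map_eq f g -> aff_gen f1 f2 f3 g.

Inductive mat_gen (A1 A2 A3 : mat2) : mat2 -> Prop :=
| mg_1 : mat_gen A1 A2 A3 A1
| mg_2 : mat_gen A1 A2 A3 A2
| mg_3 : mat_gen A1 A2 A3 A3
| mg_id : mat_gen A1 A2 A3 mat_id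
| mg_mul : forall A B, mat_gen A1 A2 A3 A -> mat_gen A1 A2 A3 B ->
    mat_gen A1 A2 A3 (mat_mul A B)
| mg_inv : forall A B, mat_gen A1 A2 A3 A ->
    mat_mul A B = mat_id -> mat_mul B A = mat_id -> mat_gen A1 A2 A3 B.

Definition alpha : mat2 := Mat2 1 0 0 (-1).
Definition beta : mat2 := Mat2 (1/2) (sqrt 3 / 2) (sqrt 3 / 2) (-1/2).
Definition gamma : mat2 := Mat2 (-1) (2 * sqrt 3) 0 1.

From Stdlib Require Import Reals Lra Lia Psatz ZArith Nsatz Classical.
Open Scope R_scope.

(* Away from the marked points, F y - A y is locally constant modulo the lattice.
   The marked points are isolated and F is continuous, so it is locally constant
   everywhere, and moving along segments gives F y = A y + t mod the lattice for one
   t.  As F respects the lattice, A maps it into itself: in the basis glue2, glue3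
   it is an integer matrix M, and the inverse of F shows that M is unimodular.
   Sending the two vertex classes ±(1/3, 1/3) to themselves while 0 is unmarked
   forces t into the lattice and M into a congruence group Gamma; conversely every
   M in Gamma is induced by the linear map itself.  Hence the Veech homomorphism is
   injective with image Gamma, and Gamma is generated by the matrices of alpha,
   beta, gamma through a Euclidean descent on the first column. *)

Lemma sqrt3_sq : sqrt 3 * sqrt 3 = 3.
Proof. apply sqrt_sqrt; lra. Qed.

Lemma sqrt3_pos : 0 < sqrt 3.
Proof. apply sqrt_lt_R0; lra. Qed.

Lemma sqrt3_lt_2 : sqrt 3 < 2.
Proof. pose proof sqrt3_sq; pose proof sqrt3_pos; nra. Qed.

(* Identities in Q(sqrt 3): [nsatz] knows no inverses, so the constants
   /2, /3, /4, /6 and sqrt 3 become variables constrained by their defining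
   equations. *)
Ltac sqrt3_nsatz :=
  repeat match goal with H : ?T |- _ =>
    lazymatch type of T with
    | Prop => lazymatch T with @eq R _ _ => fail | _ => clear H end
    end end;
  unfold Rdiv in *;
  let h2 := fresh in let h3 := fresh in let h4 := fresh in
  let h6 := fresh in let hs := fresh in
  assert (h2 : 2 * /2 = 1) by field;
  assert (h3 : 3 * /3 = 1) by field;
  assert (h4 : 4 * /4 = 1) by field;
  assert (h6 : 6 * /6 = 1) by field;
  pose proof sqrt3_sq as hs;
  generalize dependent (/2); generalize dependent (/3);
  generalize dependent (/4); generalize dependent (/6);
  generalize dependent (sqrt 3); intros; nsatz.

Ltac negIZR :=
  repeat match goal with |- context [IZR (Zneg ?p)] =>
    change (IZR (Zneg p)) with (- IZR (Zpos p)) end.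

Ltac izr :=
  repeat first [rewrite plus_IZR | rewrite minus_IZR | rewrite mult_IZR | rewrite opp_IZR].

Ltac lia_mod3 :=
  repeat match goal with
  | |- context [ (?x mod 3)%Z ] =>
      pose proof (Z.div_mod x 3 ltac:(lia)); pose proof (Z.mod_pos_bound x 3 ltac:(lia));
      generalize dependent (x mod 3)%Z; generalize dependent (x / 3)%Z; intros
  | |- context [ (?x / 3)%Z ] =>
      pose proof (Z.div_mod x 3 ltac:(lia)); pose proof (Z.mod_pos_bound x 3 ltac:(lia));
      generalize dependent (x mod 3)%Z; generalize dependent (x / 3)%Z; intros
  | H : context [ (?x mod 3)%Z ] |- _ =>
      pose proof (Z.div_mod x 3 ltac:(lia)); pose proof (Z.mod_pos_bound x 3 ltac:(lia));
      generalize dependent (x mod 3)%Z; generalize dependent (x / 3)%Z; intros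
  end; lia.

(** * Lattice coordinates *)

(* Coordinates in the basis [glue2], [glue3] of the lattice ([glue1 = glue2 - glue3]). *)
Definition lat1 (v : pt) : R := fst v / 3 + snd v * sqrt 3 / 3.
Definition lat2 (v : pt) : R := fst v / 3 - snd v * sqrt 3 / 3.

Definition is_int (r : R) : Prop := exists m : Z, r = IZR m.

Lemma is_int_0 : is_int 0.
Proof. exists 0%Z; reflexivity. Qed.

Lemma is_int_add r1 r2 : is_int r1 -> is_int r2 -> is_int (r1 + r2).
Proof. intros [a ->] [b ->]. exists (a + b)%Z. now rewrite plus_IZR. Qed.

Lemma is_int_opp r : is_int r -> is_int (- r).
Proof. intros [a ->]. exists (- a)%Z. now rewrite opp_IZR. Qed.

Lemma is_int_sub r1 r2 : is_int r1 -> is_int r2 -> is_int (r1 - r2).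
Proof. intros. apply is_int_add; [|apply is_int_opp]; assumption. Qed.

Lemma is_int_IZR_mul z r : is_int r -> is_int (IZR z * r).
Proof. intros [a ->]. exists (z * a)%Z. now rewrite mult_IZR. Qed.

Lemma is_int_eq r1 r2 : r1 = r2 -> is_int r1 -> is_int r2.
Proof. now intros ->. Qed.

Lemma lat_coordK v : v = (3/2 * (lat1 v + lat2 v), sqrt 3 / 2 * (lat1 v - lat2 v)).
Proof. destruct v as [x y]; unfold lat1, lat2; simpl; f_equal; sqrt3_nsatz. Qed.

Lemma lat_coord_inj u v : lat1 u = lat1 v -> lat2 u = lat2 v -> u = v.
Proof. intros H1 H2. now rewrite (lat_coordK u), (lat_coordK v), H1, H2. Qed.

Lemma lat_coord_surj s t : exists x, lat1 x = s /\ lat2 x = t.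
Proof.
  exists (3/2 * (s + t), sqrt 3 / 2 * (s - t)).
  unfold lat1, lat2; cbn [fst snd]; split; sqrt3_nsatz.
Qed.

Lemma lat1_add u v : lat1 (padd u v) = lat1 u + lat1 v.
Proof. unfold lat1, padd; simpl; field. Qed.
Lemma lat2_add u v : lat2 (padd u v) = lat2 u + lat2 v.
Proof. unfold lat2, padd; simpl; field. Qed.
Lemma lat1_sub u v : lat1 (psub u v) = lat1 u - lat1 v.
Proof. unfold lat1, psub; simpl; field. Qed.
Lemma lat2_sub u v : lat2 (psub u v) = lat2 u - lat2 v.
Proof. unfold lat2, psub; simpl; field. Qed.
Lemma lat1_0 : lat1 (0, 0) = 0.
Proof. unfold lat1; simpl; field. Qed.
Lemma lat2_0 : lat2 (0, 0) = 0.
Proof. unfold lat2; simpl; field. Qed.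

Lemma in_lattice_lat v : in_lattice v <-> is_int (lat1 v) /\ is_int (lat2 v).
Proof.
  split.
  - intros (a & b & c & ->).
    unfold lat1, lat2, glue1, glue2, glue3, padd, pscale; cbn [fst snd]; split.
    + exists (a + b)%Z. rewrite plus_IZR. sqrt3_nsatz.
    + exists (c - a)%Z. rewrite minus_IZR. sqrt3_nsatz.
  - intros [[m Hm] [n Hn]]. exists 0%Z, m, n.
    destruct v as [x y]; unfold lat1, lat2 in *; cbn [fst snd] in *.
    unfold glue1, glue2, glue3, padd, pscale; cbn [fst snd]. f_equal; sqrt3_nsatz.
Qed.

Lemma equiv_lat u v : equiv u v <-> is_int (lat1 u - lat1 v) /\ is_int (lat2 u - lat2 v).
Proof. unfold equiv. now rewrite in_lattice_lat, lat1_sub, lat2_sub. Qed.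

Lemma equiv_refl u : equiv u u.
Proof.
  apply equiv_lat; split; (apply (is_int_eq 0); [ring | apply is_int_0]).
Qed.

Lemma equiv_sym u v : equiv u v -> equiv v u.
Proof.
  rewrite !equiv_lat; intros [H1 H2]; split.
  - apply (is_int_eq (- (lat1 u - lat1 v))); [ring | now apply is_int_opp].
  - apply (is_int_eq (- (lat2 u - lat2 v))); [ring | now apply is_int_opp].
Qed.

Lemma equiv_trans u v w : equiv u v -> equiv v w -> equiv u w.
Proof.
  rewrite !equiv_lat; intros [H1 H2] [H3 H4]; split.
  - apply (is_int_eq ((lat1 u - lat1 v) + (lat1 v - lat1 w))); [ring | now apply is_int_add].
  - apply (is_int_eq ((lat2 u - lat2 v) + (lat2 v - lat2 w))); [ring | now apply is_int_add].
Qed.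

Lemma in_lattice_equiv0 l : in_lattice l <-> equiv l (0, 0).
Proof. now rewrite equiv_lat, in_lattice_lat, lat1_0, lat2_0, !Rminus_0_r. Qed.

Lemma in_lattice0 : in_lattice (0, 0).
Proof. apply in_lattice_equiv0, equiv_refl. Qed.

Lemma in_lattice_glue2 : in_lattice glue2.
Proof.
  exists 0%Z, 1%Z, 0%Z. unfold padd, pscale, glue1, glue2, glue3; simpl; f_equal; ring.
Qed.

Lemma in_lattice_glue3 : in_lattice glue3.
Proof.
  exists 0%Z, 0%Z, 1%Z. unfold padd, pscale, glue1, glue2, glue3; simpl; f_equal; ring.
Qed.

Lemma equiv_padd_lattice v t : in_lattice t -> equiv (padd v t) v.
Proof.
  rewrite in_lattice_lat, equiv_lat, lat1_add, lat2_add; intros [H1 H2]; split.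
  - revert H1; apply is_int_eq; ring.
  - revert H2; apply is_int_eq; ring.
Qed.

Lemma equiv_padd2r u v t : equiv (padd u t) (padd v t) -> equiv u v.
Proof.
  rewrite !equiv_lat, !lat1_add, !lat2_add; intros [H1 H2]; split.
  - revert H1; apply is_int_eq; ring.
  - revert H2; apply is_int_eq; ring.
Qed.

Lemma pnorm_ge0 v : 0 <= pnorm v.
Proof. apply sqrt_pos. Qed.

Lemma pnorm_sq v : pnorm v * pnorm v = fst v ^ 2 + snd v ^ 2.
Proof. apply sqrt_sqrt; nra. Qed.

Lemma pnorm_psub_self x : pnorm (psub x x) = 0.
Proof.
  unfold pnorm, psub; cbn [fst snd].
  replace ((fst x - fst x) ^ 2 + (snd x - snd x) ^ 2) with 0 by ring. apply sqrt_0.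
Qed.

Lemma pnorm_eq0 u : pnorm u = 0 -> u = (0, 0).
Proof.
  intros H. pose proof (pnorm_sq u) as Hsq. rewrite H in Hsq.
  destruct u as [u1 u2]; cbn [fst snd] in Hsq. f_equal; nra.
Qed.

Lemma pnorm_scale k u : pnorm (pscale k u) = Rabs k * pnorm u.
Proof.
  unfold pnorm, pscale; cbn [fst snd].
  replace ((k * fst u) ^ 2 + (k * snd u) ^ 2) with (Rsqr k * (fst u ^ 2 + snd u ^ 2))
    by (unfold Rsqr; ring).
  now rewrite sqrt_mult_alt, sqrt_Rsqr_abs by apply Rle_0_sqr.
Qed.

Lemma Rabs_fst_le v : Rabs (fst v) <= pnorm v.
Proof. rewrite <- sqrt_Rsqr_abs. apply sqrt_le_1_alt. unfold Rsqr; nra. Qed.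

Lemma Rabs_snd_le v : Rabs (snd v) <= pnorm v.
Proof. rewrite <- sqrt_Rsqr_abs. apply sqrt_le_1_alt. unfold Rsqr; nra. Qed.

Lemma pnorm_le_Rabs v : pnorm v <= Rabs (fst v) + Rabs (snd v).
Proof.
  pose proof (Rabs_pos (fst v)); pose proof (Rabs_pos (snd v)).
  rewrite <- (sqrt_Rsqr (Rabs (fst v) + Rabs (snd v))) by lra.
  apply sqrt_le_1_alt. rewrite <- !Rsqr_pow2, (Rsqr_abs (fst v)), (Rsqr_abs (snd v)).
  unfold Rsqr; nra.
Qed.

Lemma Rabs_lat1_le v : Rabs (lat1 v) <= pnorm v.
Proof.
  pose proof (Rabs_fst_le v); pose proof (Rabs_snd_le v); pose proof sqrt3_pos;
  pose proof sqrt3_lt_2.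
  unfold lat1. eapply Rle_trans; [apply Rabs_triang|].
  replace (fst v / 3) with (fst v * (1/3)) by field.
  replace (snd v * sqrt 3 / 3) with (snd v * (sqrt 3 / 3)) by field.
  rewrite !Rabs_mult, (Rabs_pos_eq (1/3)), (Rabs_pos_eq (sqrt 3 / 3)) by lra.
  pose proof (Rabs_pos (fst v)); pose proof (Rabs_pos (snd v)). nra.
Qed.

Lemma Rabs_lat2_le v : Rabs (lat2 v) <= pnorm v.
Proof.
  pose proof (Rabs_fst_le v); pose proof (Rabs_snd_le v); pose proof sqrt3_pos;
  pose proof sqrt3_lt_2.
  unfold lat2, Rminus. eapply Rle_trans; [apply Rabs_triang|]. rewrite Rabs_Ropp.
  replace (fst v / 3) with (fst v * (1/3)) by field.
  replace (snd v * sqrt 3 / 3) with (snd v * (sqrt 3 / 3)) by field.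
  rewrite !Rabs_mult, (Rabs_pos_eq (1/3)), (Rabs_pos_eq (sqrt 3 / 3)) by lra.
  pose proof (Rabs_pos (fst v)); pose proof (Rabs_pos (snd v)). nra.
Qed.

Lemma pnorm_sq_lat v :
  pnorm v * pnorm v = 3 * (lat1 v ^ 2 + lat1 v * lat2 v + lat2 v ^ 2).
Proof.
  rewrite pnorm_sq. destruct v as [x y]; unfold lat1, lat2; simpl; sqrt3_nsatz.
Qed.

(** * Marked points *)

Definition marked_residue (m n : Z) : Prop := ((m - n) mod 3 = 0 /\ m mod 3 <> 0)%Z.

(* The vertices of E have lattice coordinates ±(1/3, 1/3), ±(2/3, -1/3) and
   ±(1/3, -2/3): the marked points are the two classes ±(1/3, 1/3) mod Z^2. *)
Definition marked_lat (x : pt) : Prop :=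
  exists m n : Z, 3 * lat1 x = IZR m /\ 3 * lat2 x = IZR n /\ marked_residue m n.

Lemma marked_lat_equiv x w : equiv x w -> marked_lat w -> marked_lat x.
Proof.
  intros He (mw & nw & H1 & H2 & [H3 H4]). apply equiv_lat in He.
  destruct He as [[i Hi] [j Hj]].
  exists (3 * i + mw)%Z, (3 * j + nw)%Z. izr. unfold marked_residue.
  repeat split; [lra | lra | lia_mod3 | lia_mod3].
Qed.

Lemma marked_lat_vertex w : In w hex_vertices -> marked_lat w.
Proof.
  intros Hw; simpl in Hw.
  destruct Hw as [<-|[<-|[<-|[<-|[<-|[<-|[]]]]]]];
    [exists 1%Z, 1%Z | exists 2%Z, (-1)%Z | exists 1%Z, (-2)%Z
    | exists (-1)%Z, (-1)%Z | exists (-2)%Z, 1%Z | exists (-1)%Z, 2%Z];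
    unfold lat1, lat2, marked_residue; cbn [fst snd]; negIZR;
    (split; [sqrt3_nsatz | split; [sqrt3_nsatz | split; vm_compute; congruence]]).
Qed.

Lemma is_marked_lat x : is_marked x <-> marked_lat x.
Proof.
  split.
  - intros (w & Hw & He). exact (marked_lat_equiv x w He (marked_lat_vertex w Hw)).
  - intros (m & n & Hm & Hn & Hmn & Hm3).
    assert (Hsign : (m mod 3 = 1 \/ m mod 3 = 2)%Z)
      by (pose proof (Z.mod_pos_bound m 3); lia).
    destruct Hsign as [Hr | Hr];
      [exists (1, 0) | exists (-1, 0)]; (split; [simpl; tauto|]);
      apply equiv_lat; unfold lat1 at 2, lat2 at 2; cbn [fst snd].
    + split; [exists (m / 3)%Z | exists (n / 3)%Z].
      * assert (IZR m = 3 * IZR (m / 3) + 1)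
          by (rewrite <- mult_IZR, <- plus_IZR; f_equal; lia_mod3). lra.
      * assert (IZR n = 3 * IZR (n / 3) + 1)
          by (rewrite <- mult_IZR, <- plus_IZR; f_equal; lia_mod3). lra.
    + split; [exists (m / 3 + 1)%Z | exists (n / 3 + 1)%Z].
      * assert (IZR m = 3 * IZR (m / 3 + 1) - 1)
          by (rewrite <- mult_IZR, <- minus_IZR; f_equal; lia_mod3). lra.
      * assert (IZR n = 3 * IZR (n / 3 + 1) - 1)
          by (rewrite <- mult_IZR, <- minus_IZR; f_equal; lia_mod3). lra.
Qed.

Lemma is_marked_equiv x y : equiv x y -> is_marked x -> is_marked y.
Proof.
  intros He (w & Hw & Hxw). exists w; split; [exact Hw|].
  exact (equiv_trans _ _ _ (equiv_sym _ _ He) Hxw).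
Qed.

Lemma is_marked_1_0 : is_marked (1, 0).
Proof. exists (1, 0). split; [simpl; tauto | apply equiv_refl]. Qed.

Lemma is_marked_m1_0 : is_marked (-1, 0).
Proof. exists (-1, 0). split; [simpl; tauto | apply equiv_refl]. Qed.

Lemma not_is_marked_0 : ~ is_marked (0, 0).
Proof.
  rewrite is_marked_lat. intros (m & n & Hm & _ & _ & Hm3).
  rewrite lat1_0, Rmult_0_r in Hm. apply eq_IZR in Hm. subst m. apply Hm3. reflexivity.
Qed.

(* Differences of marked points have lattice coordinates in (1/3)Z, on which the
   squared norm 3 (s^2 + s t + t^2) is (m^2 + m n + n^2) / 3 with m, n integers. *)
Lemma marked_isolated x w :
  is_marked x -> is_marked w -> pnorm (psub w x) < 1/2 -> w = x.
Proof.
  rewrite !is_marked_lat. intros (m1 & n1 & Hm1 & Hn1 & _) (m2 & n2 & Hm2 & Hn2 & _) Hn.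
  pose proof (pnorm_sq_lat (psub w x)) as Hsq. rewrite lat1_sub, lat2_sub in Hsq.
  assert (Hs : lat1 w - lat1 x = IZR (m2 - m1) / 3) by (rewrite minus_IZR; lra).
  assert (Ht : lat2 w - lat2 x = IZR (n2 - n1) / 3) by (rewrite minus_IZR; lra).
  rewrite Hs, Ht in Hsq. set (m := (m2 - m1)%Z) in *. set (n := (n2 - n1)%Z) in *.
  pose proof (pnorm_ge0 (psub w x)).
  assert (HQ : IZR (m * m + m * n + n * n) < 1) by (izr; nra).
  apply lt_IZR in HQ.
  assert (m = 0 /\ n = 0)%Z as [Hm0 Hn0] by nia.
  rewrite Hm0 in Hs; rewrite Hn0 in Ht.
  apply lat_coord_inj; lra.
Qed.

(** * Integer matrices acting on lattice coordinates *)

Record zmat := ZM { za : Z; zb : Z; zc : Z; zd : Z }.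

Definition zmul (M N : zmat) : zmat :=
  ZM (za M * za N + zb M * zc N)%Z (za M * zb N + zb M * zd N)%Z
     (zc M * za N + zd M * zc N)%Z (zc M * zb N + zd M * zd N)%Z.
Definition zI : zmat := ZM 1 0 0 1.
Definition zdet (M : zmat) : Z := (za M * zd M - zb M * zc M)%Z.
Definition zinv (M : zmat) : zmat :=
  ZM (zdet M * zd M) (- (zdet M * zb M)) (- (zdet M * zc M)) (zdet M * za M).

Definition zunimodular (M : zmat) : Prop := (zdet M = 1 \/ zdet M = -1)%Z.

Lemma zmulA M N P : zmul M (zmul N P) = zmul (zmul M N) P.
Proof. destruct M, N, P; unfold zmul; cbn [za zb zc zd]; f_equal; ring. Qed.

Lemma zmul1 M : zmul zI M = M.
Proof. destruct M; unfold zmul, zI; cbn [za zb zc zd]; f_equal; ring. Qed.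

Lemma zdet_mul M N : zdet (zmul M N) = (zdet M * zdet N)%Z.
Proof. destruct M, N; unfold zdet, zmul; cbn [za zb zc zd]; ring. Qed.

Lemma zmulV M : zunimodular M -> zmul M (zinv M) = zI.
Proof.
  destruct M as [a b c d]; unfold zunimodular, zinv, zdet, zmul, zI; cbn [za zb zc zd].
  intros [H | H]; rewrite H; f_equal; lia.
Qed.

Lemma zmulVl M : zunimodular M -> zmul (zinv M) M = zI.
Proof.
  destruct M as [a b c d]; unfold zunimodular, zinv, zdet, zmul, zI; cbn [za zb zc zd].
  intros [H | H]; rewrite H; f_equal; lia.
Qed.

Lemma mat_mulA A B C : mat_mul A (mat_mul B C) = mat_mul (mat_mul A B) C.
Proof. destruct A, B, C; unfold mat_mul; cbn; f_equal; ring. Qed.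

Lemma mat_mul1 A : mat_mul mat_id A = A.
Proof. destruct A; unfold mat_mul, mat_id; cbn; f_equal; ring. Qed.

Lemma mat_mulr1 A : mat_mul A mat_id = A.
Proof. destruct A; unfold mat_mul, mat_id; cbn; f_equal; ring. Qed.

Lemma mat_apply_mul A B v : mat_apply (mat_mul A B) v = mat_apply A (mat_apply B v).
Proof. destruct A, B, v; unfold mat_mul, mat_apply; cbn; f_equal; ring. Qed.

Lemma mat_apply_id v : mat_apply mat_id v = v.
Proof. destruct v; unfold mat_apply, mat_id; cbn; f_equal; ring. Qed.

Lemma mat_apply0 A : mat_apply A (0, 0) = (0, 0).
Proof. unfold mat_apply; cbn [fst snd]; f_equal; ring. Qed.

Lemma mat_apply_psub A x y :
  mat_apply A (psub x y) = psub (mat_apply A x) (mat_apply A y).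
Proof. unfold mat_apply, psub; cbn [fst snd]; f_equal; ring. Qed.

(* The real matrix acting on lattice coordinates by [[a, b], [c, d]]. *)
Definition mat_of_lat (a b c d : R) : mat2 :=
  Mat2 ((a + b + c + d) / 2) (sqrt 3 / 2 * (a + c - b - d))
       (sqrt 3 / 6 * (a - c + b - d)) ((a - c - b + d) / 2).

Definition mat_of_zmat (M : zmat) : mat2 :=
  mat_of_lat (IZR (za M)) (IZR (zb M)) (IZR (zc M)) (IZR (zd M)).

Lemma lat1_mat_of_zmat M v :
  lat1 (mat_apply (mat_of_zmat M) v) = IZR (za M) * lat1 v + IZR (zb M) * lat2 v.
Proof.
  destruct M as [a b c d], v as [x y].
  unfold mat_of_zmat, mat_of_lat, lat1, lat2, mat_apply; cbn. sqrt3_nsatz.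
Qed.

Lemma lat2_mat_of_zmat M v :
  lat2 (mat_apply (mat_of_zmat M) v) = IZR (zc M) * lat1 v + IZR (zd M) * lat2 v.
Proof.
  destruct M as [a b c d], v as [x y].
  unfold mat_of_zmat, mat_of_lat, lat1, lat2, mat_apply; cbn. sqrt3_nsatz.
Qed.

Lemma mat_of_lat_glue A :
  A = mat_of_lat (lat1 (mat_apply A glue2)) (lat1 (mat_apply A glue3))
                 (lat2 (mat_apply A glue2)) (lat2 (mat_apply A glue3)).
Proof.
  destruct A as [p q r s].
  unfold mat_of_lat, lat1, lat2, mat_apply, glue2, glue3; cbn. f_equal; sqrt3_nsatz.
Qed.

Lemma mat_of_zmat_mul M N : mat_of_zmat (zmul M N) = mat_mul (mat_of_zmat M) (mat_of_zmat N).
Proof.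
  destruct M as [a b c d], N as [a' b' c' d'].
  unfold mat_of_zmat, mat_of_lat, zmul, mat_mul; cbn. izr. f_equal; sqrt3_nsatz.
Qed.

Lemma mat_of_zmat_I : mat_of_zmat zI = mat_id.
Proof. unfold mat_of_zmat, mat_of_lat, zI, mat_id; cbn. f_equal; sqrt3_nsatz. Qed.

Lemma mat_det_of_zmat M : mat_det (mat_of_zmat M) = IZR (zdet M).
Proof.
  destruct M as [a b c d]. unfold mat_of_zmat, mat_of_lat, zdet, mat_det; cbn.
  izr. sqrt3_nsatz.
Qed.

Lemma mat_of_zmat_zinv_apply M x : zunimodular M ->
  mat_apply (mat_of_zmat (zinv M)) (mat_apply (mat_of_zmat M) x) = x.
Proof.
  intros H. now rewrite <- mat_apply_mul, <- mat_of_zmat_mul, zmulVl, mat_of_zmat_I,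
    mat_apply_id.
Qed.

Lemma mat_of_zmat_apply_zinv M x : zunimodular M ->
  mat_apply (mat_of_zmat M) (mat_apply (mat_of_zmat (zinv M)) x) = x.
Proof.
  intros H. now rewrite <- mat_apply_mul, <- mat_of_zmat_mul, zmulV, mat_of_zmat_I,
    mat_apply_id.
Qed.

Lemma in_lattice_mat_of_zmat M l : in_lattice l -> in_lattice (mat_apply (mat_of_zmat M) l).
Proof.
  rewrite !in_lattice_lat, lat1_mat_of_zmat, lat2_mat_of_zmat. intros [H1 H2].
  split; apply is_int_add; apply is_int_IZR_mul; assumption.
Qed.

Lemma lattice_preserving_zmat B :
  in_lattice (mat_apply B glue2) -> in_lattice (mat_apply B glue3) ->
  exists N, B = mat_of_zmat N.
Proof.
  rewrite !in_lattice_lat. intros [[a Ha] [c Hc]] [[b Hb] [d Hd]].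
  exists (ZM a b c d). rewrite (mat_of_lat_glue B) at 1. now rewrite Ha, Hb, Hc, Hd.
Qed.

Lemma is_int_IZR_mul_all z : (forall r, is_int (IZR z * r)) -> z = 0%Z.
Proof.
  intros H. destruct (Z.eq_dec z 0) as [|Hz]; [assumption|exfalso].
  assert (HZ : IZR z <> 0) by now apply not_0_IZR.
  destruct (H (1 / (2 * IZR z))) as [m Hm].
  replace (IZR z * (1 / (2 * IZR z))) with (1/2) in Hm by (field; exact HZ).
  assert (H1 : IZR 1 = IZR (2 * m)) by (rewrite mult_IZR; simpl; lra).
  apply eq_IZR in H1. lia.
Qed.

Lemma mat_of_zmat_equiv_inj M N :
  (forall x, equiv (mat_apply (mat_of_zmat M) x) (mat_apply (mat_of_zmat N) x)) -> M = N.
Proof.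
  intros H. destruct M as [a b c d], N as [a' b' c' d'].
  assert (K : forall s t, is_int (IZR (a - a') * s + IZR (b - b') * t) /\
                          is_int (IZR (c - c') * s + IZR (d - d') * t)).
  { intros s t. destruct (lat_coord_surj s t) as (x & Hs & Ht).
    specialize (H x). apply equiv_lat in H.
    rewrite !lat1_mat_of_zmat, !lat2_mat_of_zmat, Hs, Ht in H; cbn [za zb zc zd] in H.
    izr. destruct H as [H1 H2]. split; [revert H1 | revert H2]; apply is_int_eq; ring. }
  assert (a - a' = 0 /\ b - b' = 0 /\ c - c' = 0 /\ d - d' = 0)%Z as (? & ? & ? & ?).
  { repeat split; apply is_int_IZR_mul_all; intros r;
      [ destruct (K r 0) as [X _] | destruct (K 0 r) as [X _]
      | destruct (K r 0) as [_ X] | destruct (K 0 r) as [_ X] ];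
      revert X; apply is_int_eq; ring. }
  f_equal; lia.
Qed.

(** * The congruence group Gamma and its generators *)

(* M maps the lattice coordinates ±(1/3, 1/3) of the marked points to ±(1/3, 1/3)
   mod Z^2 exactly when both row sums are congruent to the same unit mod 3. *)
Definition row_sums_unit_mod3 (M : zmat) : Prop :=
  exists e k l : Z, (e = 1 \/ e = -1)%Z /\
    (za M + zb M = e + 3 * k)%Z /\ (zc M + zd M = e + 3 * l)%Z.

Definition in_Gamma (M : zmat) : Prop := zunimodular M /\ row_sums_unit_mod3 M.

Lemma in_Gamma_I : in_Gamma zI.
Proof. split; [now left|]. exists 1%Z, 0%Z, 0%Z. cbn; lia. Qed.

Lemma in_Gamma_mul M N : in_Gamma M -> in_Gamma N -> in_Gamma (zmul M N).
Proof.
  destruct M as [a b c d], N as [a' b' c' d'].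
  unfold in_Gamma, row_sums_unit_mod3, zunimodular.
  rewrite zdet_mul. cbn [za zb zc zd zdet zmul].
  intros [HdM (e & k & l & He & H1 & H2)] [HdN (e' & k' & l' & He' & H1' & H2')].
  split; [destruct HdM as [-> | ->], HdN as [-> | ->]; lia|].
  exists (e * e')%Z, (e' * k + a * k' + b * l')%Z, (e' * l + c * k' + d * l')%Z.
  split; [destruct He as [-> | ->], He' as [-> | ->]; lia|].
  assert (b' = e' + 3 * k' - a')%Z by lia. subst b'.
  assert (d' = e' + 3 * l' - c')%Z by lia. subst d'.
  assert (b = e + 3 * k - a)%Z by lia. subst b.
  assert (d = e + 3 * l - c)%Z by lia. subst d.
  split; ring.
Qed.

Lemma in_Gamma_inv M : in_Gamma M -> in_Gamma (zinv M).
Proof.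
  destruct M as [a b c d].
  unfold in_Gamma, row_sums_unit_mod3, zunimodular, zinv, zdet; cbn [za zb zc zd].
  intros [Hd (e & k & l & He & H1 & H2)].
  assert (a = e + 3 * k - b)%Z by lia. subst a.
  assert (c = e + 3 * l - d)%Z by lia. subst c.
  set (D := ((e + 3 * k - b) * d - b * (e + 3 * l - d))%Z) in *.
  assert (HD : (D = e * (d - b) + 3 * (k * d - b * l))%Z) by (unfold D; ring).
  clearbody D.
  split; [destruct Hd as [-> | ->]; nia|].
  exists e, (- e * (k * d - b * l) * D)%Z, (- e * (k * d - b * l) * D + D * (k - l))%Z.
  split; [assumption|].
  destruct Hd as [-> | ->]; destruct He as [-> | ->]; split; nia.
Qed.

Definition zalpha : zmat := ZM 0 1 1 0.
Definition zbeta : zmat := ZM 1 1 0 (-1).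
Definition zgamma : zmat := ZM 1 (-2) 0 (-1).

Lemma mat_of_zalpha : mat_of_zmat zalpha = alpha.
Proof. unfold mat_of_zmat, mat_of_lat, zalpha, alpha; cbn. f_equal; negIZR; sqrt3_nsatz. Qed.
Lemma mat_of_zbeta : mat_of_zmat zbeta = beta.
Proof. unfold mat_of_zmat, mat_of_lat, zbeta, beta; cbn. f_equal; negIZR; sqrt3_nsatz. Qed.
Lemma mat_of_zgamma : mat_of_zmat zgamma = gamma.
Proof. unfold mat_of_zmat, mat_of_lat, zgamma, gamma; cbn. f_equal; negIZR; sqrt3_nsatz. Qed.

Lemma in_Gamma_alpha : in_Gamma zalpha.
Proof. split; [now right|]. exists 1%Z, 0%Z, 0%Z. cbn; lia. Qed.
Lemma in_Gamma_beta : in_Gamma zbeta.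
Proof. split; [now right|]. exists (-1)%Z, 1%Z, 0%Z. cbn; lia. Qed.
Lemma in_Gamma_gamma : in_Gamma zgamma.
Proof. split; [now right|]. exists (-1)%Z, 0%Z, 0%Z. cbn; lia. Qed.

Definition zgen (M : zmat) : Prop := mat_gen alpha beta gamma (mat_of_zmat M).

Lemma zgen_mul M N : zgen M -> zgen N -> zgen (zmul M N).
Proof. unfold zgen; rewrite mat_of_zmat_mul; apply mg_mul. Qed.
Lemma zgen_I : zgen zI.
Proof. unfold zgen; rewrite mat_of_zmat_I; apply mg_id. Qed.
Lemma zgen_alpha : zgen zalpha.
Proof. unfold zgen; rewrite mat_of_zalpha; apply mg_1. Qed.
Lemma zgen_beta : zgen zbeta.
Proof. unfold zgen; rewrite mat_of_zbeta; apply mg_2. Qed.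
Lemma zgen_gamma : zgen zgamma.
Proof. unfold zgen; rewrite mat_of_zgamma; apply mg_3. Qed.

Lemma zgen_inv M : zgen M -> zunimodular M -> zgen (zinv M).
Proof.
  intros HM Hu. apply (mg_inv _ _ _ _ _ HM);
    rewrite <- mat_of_zmat_mul, <- mat_of_zmat_I; f_equal; auto using zmulV, zmulVl.
Qed.

Lemma zgen_cancel_l h M : zgen h -> zunimodular h -> zgen (zmul h M) -> zgen M.
Proof.
  intros Hh Hu HhM. replace M with (zmul (zinv h) (zmul h M)).
  - apply zgen_mul; [apply zgen_inv|]; assumption.
  - now rewrite zmulA, zmulVl, zmul1.
Qed.

Definition ztransvection (j : Z) : zmat := ZM 1 (3 * j) 0 1.

Lemma zgen_transvection j : zgen (ztransvection j).
Proof.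
  assert (Hmul : forall i i', ztransvection (i + i') = zmul (ztransvection i) (ztransvection i'))
    by (intros; unfold zmul, ztransvection; cbn [za zb zc zd]; f_equal; lia).
  assert (H1 : zgen (ztransvection 1)) by exact (zgen_mul _ _ zgen_gamma zgen_beta).
  assert (Hm1 : zgen (ztransvection (-1))) by exact (zgen_mul _ _ zgen_beta zgen_gamma).
  induction j using Z.peano_ind.
  - exact zgen_I.
  - rewrite <- Z.add_1_r, Hmul. now apply zgen_mul.
  - rewrite <- Z.sub_1_r, <- Z.add_opp_r, Hmul. now apply zgen_mul.
Qed.

(* [(zalpha zbeta)^3 = -1]: zalpha zbeta is the rotation by pi/3. *)
Lemma zgen_neg_I : zgen (ZM (-1) 0 0 (-1)).
Proof.
  change (ZM (-1) 0 0 (-1))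
    with (zmul (zmul zalpha zbeta) (zmul (zmul zalpha zbeta) (zmul zalpha zbeta))).
  repeat apply zgen_mul; auto using zgen_alpha, zgen_beta.
Qed.

Lemma zgen_upper_unipotent b d k :
  (d = 1 \/ d = -1)%Z -> (1 + b = d + 3 * k)%Z -> zgen (ZM 1 b 0 d).
Proof.
  intros [-> | ->] H.
  - replace (ZM 1 b 0 1) with (ztransvection k) by (unfold ztransvection; f_equal; lia).
    apply zgen_transvection.
  - replace (ZM 1 b 0 (-1)) with (zmul (ztransvection (- k)) zgamma)
      by (unfold zmul, ztransvection, zgamma; cbn [za zb zc zd]; f_equal; lia).
    apply zgen_mul; [apply zgen_transvection | apply zgen_gamma].
Qed.

Lemma Z_unit_factor x y : (x * y = 1 \/ x * y = -1)%Z -> (x = 1 \/ x = -1)%Z.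
Proof.
  intros [H | H]; [apply (Z.eq_mul_1 x y) | apply (Z.eq_mul_1 x (- y))]; lia.
Qed.

Lemma zgen_upper M : in_Gamma M -> zc M = 0%Z -> zgen M.
Proof.
  destruct M as [a b c d].
  unfold in_Gamma, row_sums_unit_mod3, zunimodular, zdet; cbn [za zb zc zd].
  intros [Hd (e & k & l & He & H1 & H2)] Hc. subst c.
  rewrite Z.mul_0_r, Z.sub_0_r in Hd.
  assert (Ha : (a = 1 \/ a = -1)%Z) by exact (Z_unit_factor a d Hd).
  assert (d = e).
  { rewrite Z.mul_comm in Hd. destruct (Z_unit_factor d a Hd); lia. }
  subst d. destruct Ha as [-> | ->].
  - eapply zgen_upper_unipotent; eassumption.
  - replace (ZM (-1) b 0 e) with (zmul (ZM (-1) 0 0 (-1)) (ZM 1 (- b) 0 (- e)))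
      by (unfold zmul; cbn [za zb zc zd]; f_equal; lia).
    apply zgen_mul; [apply zgen_neg_I|].
    apply (zgen_upper_unipotent _ _ (- k)); lia.
Qed.

Definition zsize (M : zmat) : Z := (Z.abs (za M) + Z.abs (zc M))%Z.

Lemma in_Gamma_za_neq_zc M : in_Gamma M -> za M <> zc M.
Proof.
  destruct M as [a b c d].
  unfold in_Gamma, row_sums_unit_mod3, zunimodular, zdet; cbn [za zb zc zd].
  intros [Hd (e & k & l & _ & H1 & H2)] ->.
  assert (b = e + 3 * k - c)%Z by lia. subst b.
  assert (d = e + 3 * l - c)%Z by lia. subst d.
  assert ((c * (e + 3 * l - c) - (e + 3 * k - c) * c) = 3 * (c * (l - k)))%Z by ring.
  lia.
Qed.

Ltac descend_with h :=
  exists h; split; [|split];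
  [ repeat apply zgen_mul; auto using zgen_alpha, zgen_beta, zgen_gamma
  | repeat apply in_Gamma_mul; auto using in_Gamma_alpha, in_Gamma_beta, in_Gamma_gamma
  | unfold zsize; cbn [zmul za zb zc zd zalpha zbeta zgamma]; lia ].

(* Left multiplication by zbeta zgamma, zgamma, zbeta subtracts from the first row
   3, 2, resp. -1 times the second one (up to sign); conjugating by zalpha does
   the same with the rows exchanged. *)
Lemma Gamma_descent M : in_Gamma M -> za M <> 0%Z -> zc M <> 0%Z ->
  exists h, zgen h /\ in_Gamma h /\ (zsize (zmul h M) < zsize M)%Z.
Proof.
  intros HM Ha Hc. pose proof (in_Gamma_za_neq_zc M HM) as Hac.
  destruct M as [a b c d]; cbn [za zb zc zd] in *.
  assert (Hsign : (((0 < a /\ 0 < c) \/ (a < 0 /\ c < 0))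
                   \/ ((0 < a /\ c < 0) \/ (a < 0 /\ 0 < c)))%Z) by lia.
  destruct Hsign as [Hsame | Hopp].
  - destruct (Z_lt_le_dec (Z.abs c) (Z.abs a)) as [Hlt | Hle].
    + destruct (Z_le_gt_dec (3 * Z.abs c) (Z.abs a)).
      * descend_with (zmul zbeta zgamma).
      * descend_with zgamma.
    + destruct (Z_le_gt_dec (3 * Z.abs a) (Z.abs c)).
      * descend_with (zmul zalpha (zmul (zmul zbeta zgamma) zalpha)).
      * descend_with (zmul zalpha (zmul zgamma zalpha)).
  - destruct (Z_le_gt_dec (Z.abs c) (Z.abs a)).
    + descend_with zbeta.
    + descend_with (zmul zalpha (zmul zbeta zalpha)).
Qed.

Lemma zgen_of_in_Gamma M : in_Gamma M -> zgen M.
Proof.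
  remember (Z.to_nat (zsize M)) as n eqn:Hn. revert M Hn.
  induction n as [n IH] using lt_wf_ind. intros M Hn HM.
  destruct (Z.eq_dec (zc M) 0) as [Hc | Hc]; [now apply zgen_upper|].
  destruct (Z.eq_dec (za M) 0) as [Ha | Ha].
  - apply (zgen_cancel_l zalpha); [apply zgen_alpha | now right|].
    apply zgen_upper; [now apply in_Gamma_mul; [apply in_Gamma_alpha|]|].
    destruct M; cbn [zmul za zb zc zd zalpha] in *; lia.
  - destruct (Gamma_descent M HM Ha Hc) as (h & Hh & Gh & Hlt).
    apply (zgen_cancel_l h); [exact Hh | apply Gh|].
    apply (IH (Z.to_nat (zsize (zmul h M)))); [|reflexivity | now apply in_Gamma_mul].
    unfold zsize in *; lia.
Qed.

Definition near_lat (u v : pt) (e : R) : Prop :=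
  exists m n : Z, Rabs (lat1 u - lat1 v - IZR m) < e /\ Rabs (lat2 u - lat2 v - IZR n) < e.

Lemma near_lat_of_near u v e : near u v e -> near_lat u v e.
Proof.
  intros (l & Hl & Hn). apply in_lattice_lat in Hl. destruct Hl as [[m Hm] [n Hn']].
  exists m, n. split.
  - rewrite <- Hm, <- !lat1_sub. eapply Rle_lt_trans; [apply Rabs_lat1_le | exact Hn].
  - rewrite <- Hn', <- !lat2_sub. eapply Rle_lt_trans; [apply Rabs_lat2_le | exact Hn].
Qed.

Lemma near_lat_equiv_l p p' q e : near_lat p q e -> equiv p p' -> near_lat p' q e.
Proof.
  intros (m & n & H1 & H2) He. apply equiv_lat in He. destruct He as [[i Hi] [j Hj]].
  exists (m - i)%Z, (n - j)%Z. rewrite !minus_IZR. split.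
  - replace (lat1 p' - lat1 q - (IZR m - IZR i)) with (lat1 p - lat1 q - IZR m) by lra.
    exact H1.
  - replace (lat2 p' - lat2 q - (IZR n - IZR j)) with (lat2 p - lat2 q - IZR n) by lra.
    exact H2.
Qed.

Lemma Rabs_sub_lt a b e1 e2 : Rabs a < e1 -> Rabs b < e2 -> Rabs (a - b) < e1 + e2.
Proof.
  intros. unfold Rminus. eapply Rle_lt_trans; [apply Rabs_triang|].
  rewrite Rabs_Ropp. lra.
Qed.

Lemma is_int_of_approx r :
  (forall e, 0 < e -> exists m : Z, Rabs (r - IZR m) < e) -> is_int r.
Proof.
  intros H. destruct (H (1/2)) as [m0 Hm0]; [lra|].
  exists m0. destruct (Req_dec (r - IZR m0) 0) as [H0 | H0]; [lra | exfalso].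
  pose proof (Rabs_pos_lt _ H0) as Hpos.
  destruct (H (Rmin (Rabs (r - IZR m0)) (1/2))) as [m Hm]; [now apply Rmin_pos; lra|].
  pose proof (Rmin_l (Rabs (r - IZR m0)) (1/2)); pose proof (Rmin_r (Rabs (r - IZR m0)) (1/2)).
  assert (Hmm0 : Rabs (IZR (m - m0)) < 1).
  { rewrite minus_IZR.
    replace (IZR m - IZR m0) with ((r - IZR m0) - (r - IZR m)) by ring.
    pose proof (Rabs_sub_lt _ _ _ _ Hm0 Hm). lra. }
  assert (m = m0).
  { apply Rabs_def2 in Hmm0. destruct Hmm0.
    assert (-1 < m - m0)%Z by (apply lt_IZR; simpl; lra).
    assert (m - m0 < 1)%Z by (apply lt_IZR; simpl; lra). lia. }
  subst m. lra.
Qed.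

Lemma equiv_of_near_lat u v : (forall e, 0 < e -> near_lat u v e) -> equiv u v.
Proof.
  intros H. apply equiv_lat. split; apply is_int_of_approx; intros e He;
    destruct (H e He) as (m & n & H1 & H2); eauto.
Qed.

Definition mat_norm (A : mat2) : R :=
  Rabs (m11 A) + Rabs (m12 A) + Rabs (m21 A) + Rabs (m22 A).

Lemma mat_norm_ge0 A : 0 <= mat_norm A.
Proof.
  unfold mat_norm. pose proof (Rabs_pos (m11 A)); pose proof (Rabs_pos (m12 A));
  pose proof (Rabs_pos (m21 A)); pose proof (Rabs_pos (m22 A)). lra.
Qed.

Lemma pnorm_mat_apply_le A v : pnorm (mat_apply A v) <= 2 * mat_norm A * pnorm v.
Proof.
  assert (Hlin : forall p q, Rabs (p * fst v + q * snd v) <= (Rabs p + Rabs q) * pnorm v).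
  { intros p q. eapply Rle_trans; [apply Rabs_triang|]. rewrite !Rabs_mult.
    pose proof (Rabs_fst_le v); pose proof (Rabs_snd_le v).
    pose proof (Rabs_pos p); pose proof (Rabs_pos q). nra. }
  eapply Rle_trans; [apply pnorm_le_Rabs|]. unfold mat_apply, mat_norm; cbn [fst snd].
  pose proof (Hlin (m11 A) (m12 A)); pose proof (Hlin (m21 A) (m22 A)).
  pose proof (pnorm_ge0 v); pose proof (Rabs_pos (m11 A)); pose proof (Rabs_pos (m12 A));
  pose proof (Rabs_pos (m21 A)); pose proof (Rabs_pos (m22 A)). nra.
Qed.

Lemma mat_apply_lipschitz A x y e :
  pnorm (psub y x) < e / (2 * mat_norm A + 1) ->
  pnorm (psub (mat_apply A y) (mat_apply A x)) < e.
Proof.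
  intros Hy. pose proof (mat_norm_ge0 A). pose proof (pnorm_ge0 (psub y x)).
  rewrite <- mat_apply_psub. eapply Rle_lt_trans; [apply pnorm_mat_apply_le|].
  apply (Rmult_lt_compat_r (2 * mat_norm A + 1)) in Hy; [|lra].
  unfold Rdiv in Hy. rewrite Rmult_assoc, Rinv_l in Hy by lra. nra.
Qed.

Lemma quot_continuous_mat_apply A : quot_continuous (mat_apply A).
Proof.
  intros x e He. exists (e / (2 * mat_norm A + 1)). pose proof (mat_norm_ge0 A).
  split; [apply Rdiv_lt_0_compat; lra|].
  intros y Hy. exists (0, 0). split; [apply in_lattice0|].
  replace (psub (psub (mat_apply A y) (mat_apply A x)) (0, 0))
    with (psub (mat_apply A y) (mat_apply A x))
    by (unfold psub; cbn [fst snd]; f_equal; ring).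
  now apply mat_apply_lipschitz.
Qed.

(** * From local to global affinity *)

Lemma interval_locally_equiv (phi : R -> pt) a b : a <= b ->
  (forall t, a <= t <= b -> exists d, 0 < d /\
      forall s, a <= s <= b -> Rabs (s - t) < d -> equiv (phi s) (phi t)) ->
  equiv (phi a) (phi b).
Proof.
  intros Hab Hloc.
  set (E := fun t => a <= t <= b /\ forall s, a <= s <= t -> equiv (phi s) (phi a)).
  assert (Ea : E a).
  { split; [lra|]. intros s Hs. replace s with a by lra. apply equiv_refl. }
  assert (Eb : bound E) by (exists b; intros t [Ht _]; lra).
  destruct (completeness E Eb (ex_intro _ a Ea)) as [sup [Hub Hlub]].
  assert (Hsup : a <= sup <= b)
    by (split; [now apply Hub | apply Hlub; intros t [Ht _]; lra]).
  destruct (Hloc sup Hsup) as (d & Hd & Hnear).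
  assert (Ht : exists t, E t /\ sup - d < t).
  { apply NNPP; intro Hn.
    assert (Hub' : is_upper_bound E (sup - d)).
    { intros t Et. apply Rnot_lt_le; intro Hlt. apply Hn. now exists t. }
    specialize (Hlub _ Hub'); lra. }
  destruct Ht as (t & [Ht Et] & Htsup).
  assert (t <= sup) by now apply Hub.
  assert (Esup : equiv (phi sup) (phi a)).
  { apply equiv_trans with (phi t); [apply equiv_sym, Hnear; [lra|] | apply Et; lra].
    apply Rabs_def1; lra. }
  (* the set E reaches [min b (sup + d/2)], which forces sup = b *)
  set (r := Rmin b (sup + d / 2)).
  assert (Hr : r <= b /\ r <= sup + d / 2 /\ a <= r)
    by (unfold r; repeat split; [apply Rmin_l | apply Rmin_r | apply Rmin_glb; lra]).
  assert (Er : E r).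
  { split; [lra|]. intros s Hs. destruct (Rle_dec s t).
    - apply Et; lra.
    - apply equiv_trans with (phi sup); [apply Hnear; [lra|] | exact Esup].
      apply Rabs_def1; lra. }
  assert (Hrb : r = b).
  { assert (r <= sup) by now apply Hub.
    unfold r in *. destruct (Rle_dec b (sup + d / 2)).
    - now apply Rmin_left.
    - rewrite Rmin_right in * by lra. lra. }
  apply equiv_sym, (proj2 Er). lra.
Qed.

Definition seg (x u : pt) (t : R) : pt := padd x (pscale t u).

Lemma seg_0 x u : seg x u 0 = x.
Proof. destruct x; unfold seg, padd, pscale; cbn [fst snd]; f_equal; ring. Qed.

Lemma seg_1 x w : seg x (psub w x) 1 = w.
Proof. destruct x, w; unfold seg, padd, pscale, psub; cbn [fst snd]; f_equal; ring. Qed.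

Lemma pnorm_seg_sub x u s t : pnorm (psub (seg x u s) (seg x u t)) = Rabs (s - t) * pnorm u.
Proof.
  rewrite <- pnorm_scale. f_equal. unfold seg, padd, pscale, psub; cbn [fst snd].
  f_equal; ring.
Qed.

Lemma pnorm_seg_sub0 x u t : pnorm (psub (seg x u t) x) = Rabs t * pnorm u.
Proof. rewrite <- (seg_0 x u) at 2. now rewrite pnorm_seg_sub, Rminus_0_r. Qed.

Section Translation_part.

Variables (F : pt -> pt) (A : mat2).

Definition transl (y : pt) : pt := psub (F y) (mat_apply A y).

Definition transl_locally_const (x : pt) : Prop :=
  exists d, 0 < d /\ forall y, pnorm (psub y x) < d -> equiv (transl y) (transl x).

Lemma transl_const_on_segment x u a b : a <= b ->
  (forall t, a <= t <= b -> transl_locally_const (seg x u t)) ->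
  equiv (transl (seg x u a)) (transl (seg x u b)).
Proof.
  intros Hab Hloc. apply (interval_locally_equiv (fun t => transl (seg x u t))); [exact Hab|].
  intros t Ht. destruct (Hloc t Ht) as (d & Hd & Hnear).
  pose proof (pnorm_ge0 u).
  exists (d / (pnorm u + 1)). split; [apply Rdiv_lt_0_compat; lra|].
  intros s _ Hst. apply Hnear. rewrite pnorm_seg_sub.
  apply (Rmult_lt_compat_r (pnorm u + 1)) in Hst; [|lra].
  unfold Rdiv in Hst. rewrite Rmult_assoc, Rinv_l in Hst by lra.
  pose proof (Rabs_pos (s - t)). nra.
Qed.

Hypothesis F_cont : quot_continuous F.
Hypothesis F_loc : locally_affine_off_marked F A.

Lemma transl_locally_const_unmarked x : ~ is_marked x -> transl_locally_const x.
Proof.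
  intros Hx. destruct (F_loc x Hx) as (d & c & Hd & Hc). exists d. split; [exact Hd|].
  intros y Hy.
  assert (H1 := Hc y Hy).
  assert (H2 : equiv (F x) (padd (mat_apply A x) c)) by (apply Hc; now rewrite pnorm_psub_self).
  apply equiv_lat in H1, H2. apply equiv_lat. unfold transl.
  rewrite !lat1_sub, !lat2_sub. rewrite !lat1_add in H1, H2. rewrite !lat2_add in H1, H2.
  destruct H1 as [H1 H1'], H2 as [H2 H2']. split.
  - generalize (is_int_sub _ _ H1 H2); apply is_int_eq; ring.
  - generalize (is_int_sub _ _ H1' H2'); apply is_int_eq; ring.
Qed.

Lemma transl_continuous x e : 0 < e -> exists d, 0 < d /\
  forall y, pnorm (psub y x) < d -> near_lat (transl y) (transl x) e.
Proof.
  intros He. destruct (F_cont x (e / 2)) as (d1 & Hd1 & HF); [lra|].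
  pose proof (mat_norm_ge0 A).
  set (d2 := e / 2 / (2 * mat_norm A + 1)).
  assert (Hd2 : 0 < d2) by (unfold d2; apply Rdiv_lt_0_compat; lra).
  exists (Rmin d1 d2). split; [now apply Rmin_pos|]. intros y Hy.
  pose proof (Rmin_l d1 d2) as Hmin1; pose proof (Rmin_r d1 d2) as Hmin2.
  destruct (near_lat_of_near _ _ _ (HF y ltac:(lra))) as (m & n & Hm & Hn).
  assert (HA : pnorm (psub (mat_apply A y) (mat_apply A x)) < e / 2)
    by (apply mat_apply_lipschitz; fold d2; lra).
  pose proof (Rle_lt_trans _ _ _ (Rabs_lat1_le _) HA) as HA1.
  pose proof (Rle_lt_trans _ _ _ (Rabs_lat2_le _) HA) as HA2.
  rewrite lat1_sub in HA1. rewrite lat2_sub in HA2.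
  exists m, n. unfold transl. rewrite !lat1_sub, !lat2_sub.
  replace e with (e / 2 + e / 2) by field. split.
  - replace (lat1 (F y) - lat1 (mat_apply A y) - (lat1 (F x) - lat1 (mat_apply A x)) - IZR m)
      with ((lat1 (F y) - lat1 (F x) - IZR m) - (lat1 (mat_apply A y) - lat1 (mat_apply A x)))
      by ring.
    now apply Rabs_sub_lt.
  - replace (lat2 (F y) - lat2 (mat_apply A y) - (lat2 (F x) - lat2 (mat_apply A x)) - IZR n)
      with ((lat2 (F y) - lat2 (F x) - IZR n) - (lat2 (mat_apply A y) - lat2 (mat_apply A x)))
      by ring.
    now apply Rabs_sub_lt.
Qed.

(* Near a marked point x every other point w lies at the end of a segment ]x, w]
   free of marked points, so transl w agrees with transl at points arbitrarily
   close to x, hence with transl x by continuity. *)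
Lemma transl_locally_const_marked x : is_marked x -> transl_locally_const x.
Proof.
  intros Hx. exists (1/2). split; [lra|]. intros w Hw.
  destruct (classic (w = x)) as [-> | Hwx]; [apply equiv_refl|].
  set (u := psub w x). fold u in Hw.
  assert (Hu : 0 < pnorm u).
  { destruct (Rle_lt_or_eq_dec _ _ (pnorm_ge0 u)) as [|Hu0]; [assumption|].
    exfalso. apply Hwx. symmetry in Hu0. apply pnorm_eq0 in Hu0.
    destruct w, x; unfold u, psub in Hu0; injection Hu0; intros.
    f_equal; lra. }
  assert (Hopen : forall t, 0 < t <= 1 -> transl_locally_const (seg x u t)).
  { intros t Ht. apply transl_locally_const_unmarked. intro Hm.
    assert (Hsx : seg x u t = x).
    { apply marked_isolated; [exact Hx | exact Hm |].
      rewrite pnorm_seg_sub0, Rabs_pos_eq by lra. nra. }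
    pose proof (pnorm_seg_sub0 x u t) as H0.
    rewrite Hsx, pnorm_psub_self, Rabs_pos_eq in H0 by lra. nra. }
  apply equiv_of_near_lat. intros e He.
  destruct (transl_continuous x e He) as (d & Hd & Hnear).
  set (t0 := Rmin 1 (d / (2 * (pnorm u + 1)))).
  assert (Ht0 : 0 < t0 <= 1)
    by (unfold t0; split; [apply Rmin_pos; [lra | apply Rdiv_lt_0_compat; lra]
                          | apply Rmin_l]).
  assert (Ht0d : t0 * (2 * (pnorm u + 1)) <= d).
  { pose proof (Rmin_r 1 (d / (2 * (pnorm u + 1)))) as H. fold t0 in H.
    apply (Rmult_le_compat_r (2 * (pnorm u + 1))) in H; [|lra].
    unfold Rdiv in H. rewrite Rmult_assoc, Rinv_l, Rmult_1_r in H by lra. exact H. }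
  apply (near_lat_equiv_l (transl (seg x u t0))).
  - apply Hnear. rewrite pnorm_seg_sub0, Rabs_pos_eq by lra. nra.
  - rewrite <- (seg_1 x w). fold u. apply transl_const_on_segment; [lra|].
    intros t Ht. apply Hopen. lra.
Qed.

Lemma transl_locally_const_all x : transl_locally_const x.
Proof.
  destruct (classic (is_marked x)).
  - now apply transl_locally_const_marked.
  - now apply transl_locally_const_unmarked.
Qed.

Lemma locally_affine_global y : equiv (F y) (padd (mat_apply A y) (transl (0, 0))).
Proof.
  assert (H : equiv (transl (seg (0, 0) (psub y (0, 0)) 0))
                    (transl (seg (0, 0) (psub y (0, 0)) 1))).
  { apply transl_const_on_segment; [lra|]. intros; apply transl_locally_const_all. }
  rewrite seg_0, seg_1 in H. apply equiv_sym, equiv_lat in H. apply equiv_lat.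
  unfold transl in *. rewrite ?lat1_add, ?lat2_add, ?lat1_sub, ?lat2_sub in *.
  destruct H as [H1 H2].
  split; [revert H1 | revert H2]; apply is_int_eq; ring.
Qed.

End Translation_part.

(** * Affine automorphisms are the elements of Gamma *)

Lemma marked_residue_zmat M m n : in_Gamma M -> marked_residue m n ->
  marked_residue (za M * m + zb M * n) (zc M * m + zd M * n).
Proof.
  destruct M as [a b c d]; unfold in_Gamma, row_sums_unit_mod3, marked_residue; cbn [za zb zc zd].
  intros [_ (e & k & l & He & H1 & H2)] [Hmn Hm].
  assert (Hj : (n = m + 3 * ((n - m) / 3))%Z) by lia_mod3.
  set (j := ((n - m) / 3)%Z) in *. clearbody j. subst n.
  assert (b = e + 3 * k - a)%Z by lia. subst b.
  assert (d = e + 3 * l - c)%Z by lia. subst d.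
  replace (a * m + (e + 3 * k - a) * (m + 3 * j))%Z
    with (e * m + 3 * (k * m + e * j + 3 * k * j - a * j))%Z by ring.
  replace (c * m + (e + 3 * l - c) * (m + 3 * j))%Z
    with (e * m + 3 * (l * m + e * j + 3 * l * j - c * j))%Z by ring.
  destruct He as [-> | ->]; split; lia_mod3.
Qed.

(* With p = M (1, 1): if u + p and u - p are both marked residues and u is not,
   the sum 2u forces u = 0 mod 3 and then p = ±(1, 1) mod 3. *)
Lemma marked_residue_translation u1 u2 p1 p2 :
  marked_residue (u1 + p1) (u2 + p2) -> marked_residue (u1 - p1) (u2 - p2) ->
  ~ marked_residue u1 u2 ->
  (u1 mod 3 = 0 /\ u2 mod 3 = 0)%Z /\ exists e k l : Z, (e = 1 \/ e = -1)%Z /\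
     (p1 = e + 3 * k)%Z /\ (p2 = e + 3 * l)%Z.
Proof.
  unfold marked_residue. intros [Hp1 Hp2] [Hm1 Hm2] Hu.
  assert (Hu' : ~ ((u1 - u2) mod 3 = 0 /\ u1 mod 3 <> 0)%Z) by exact Hu. clear Hu.
  assert (K1 : (u1 mod 3 = 0)%Z) by lia_mod3.
  assert (K2 : (u2 mod 3 = 0)%Z) by lia_mod3.
  assert (Hp : ((p1 mod 3 = 1 /\ p2 mod 3 = 1) \/ (p1 mod 3 = 2 /\ p2 mod 3 = 2))%Z)
    by lia_mod3.
  split; [now split|].
  destruct Hp as [[X Y] | [X Y]];
    [exists 1%Z, (p1 / 3)%Z, (p2 / 3)%Z | exists (-1)%Z, (p1 / 3 + 1)%Z, (p2 / 3 + 1)%Z];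
    (split; [lia | split; lia_mod3]).
Qed.

Lemma lat_1_0 : lat1 (1, 0) = 1/3 /\ lat2 (1, 0) = 1/3.
Proof. unfold lat1, lat2; cbn [fst snd]; split; field. Qed.

Lemma lat_m1_0 : lat1 (-1, 0) = -1/3 /\ lat2 (-1, 0) = -1/3.
Proof. unfold lat1, lat2; cbn [fst snd]; split; field. Qed.

Lemma marked_translation M t :
  is_marked (padd (mat_apply (mat_of_zmat M) (1, 0)) t) ->
  is_marked (padd (mat_apply (mat_of_zmat M) (-1, 0)) t) ->
  ~ is_marked t ->
  in_lattice t /\ row_sums_unit_mod3 M.
Proof.
  rewrite !is_marked_lat. intros (m1 & n1 & Hm1 & Hn1 & R1) (m2 & n2 & Hm2 & Hn2 & R2) Ht.
  rewrite lat1_add, lat1_mat_of_zmat in Hm1, Hm2. rewrite lat2_add, lat2_mat_of_zmat in Hn1, Hn2.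
  destruct lat_1_0 as [E1 E2], lat_m1_0 as [E3 E4].
  rewrite E1, E2 in Hm1, Hn1. rewrite E3, E4 in Hm2, Hn2.
  set (p1 := (za M + zb M)%Z) in *. set (p2 := (zc M + zd M)%Z) in *.
  assert (Hu1 : 3 * lat1 t = IZR (m1 - p1)) by (unfold p1; izr; lra).
  assert (Hu2 : 3 * lat2 t = IZR (n1 - p2)) by (unfold p2; izr; lra).
  assert (Hm2' : m2 = (m1 - p1 - p1)%Z) by (apply eq_IZR; unfold p1 in *; izr; lra).
  assert (Hn2' : n2 = (n1 - p2 - p2)%Z) by (apply eq_IZR; unfold p2 in *; izr; lra).
  subst m2 n2.
  rewrite <- (Z.sub_add p1 m1), <- (Z.sub_add p2 n1) in R1.
  assert (Hu : ~ marked_residue (m1 - p1) (n1 - p2)) 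
    by (intro Hu; apply Ht; now exists (m1 - p1)%Z, (n1 - p2)%Z).
  destruct (marked_residue_translation _ _ _ _ R1 R2 Hu) as [[K1 K2] Hp].
  split; [|exact Hp].
  apply in_lattice_lat. split; [exists ((m1 - p1) / 3)%Z | exists ((n1 - p2) / 3)%Z].
  - assert (IZR (m1 - p1) = 3 * IZR ((m1 - p1) / 3)) by (rewrite <- mult_IZR; f_equal; lia_mod3).
    lra.
  - assert (IZR (n1 - p2) = 3 * IZR ((n1 - p2) / 3)) by (rewrite <- mult_IZR; f_equal; lia_mod3).
    lra.
Qed.

Definition mat_inv (A : mat2) : mat2 :=
  Mat2 (m22 A / mat_det A) (- m12 A / mat_det A) (- m21 A / mat_det A) (m11 A / mat_det A).

Lemma mat_apply_mat_inv A v : mat_det A <> 0 -> mat_apply A (mat_apply (mat_inv A) v) = v.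
Proof.
  intros HA. destruct v as [x y]. unfold mat_inv, mat_apply, mat_det in *; cbn in *.
  f_equal; field; exact HA.
Qed.

Lemma mat_det_mat_inv A : mat_det A <> 0 -> mat_det A * mat_det (mat_inv A) = 1.
Proof. intros HA. unfold mat_inv, mat_det in *; cbn. field; exact HA. Qed.

Lemma equiv_mat_apply A x y :
  (forall l, in_lattice l -> in_lattice (mat_apply A l)) ->
  equiv x y -> equiv (mat_apply A x) (mat_apply A y).
Proof. intros HA He. unfold equiv. rewrite <- mat_apply_psub. now apply HA. Qed.

Lemma lattice_preserving_of_equiv F A t : respects F ->
  (forall x, equiv (F x) (padd (mat_apply A x) t)) ->
  forall l, in_lattice l -> in_lattice (mat_apply A l).
Proof.
  intros HF HFA l Hl. apply in_lattice_equiv0 in Hl. apply in_lattice_equiv0.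
  apply (equiv_padd2r _ _ t). rewrite <- (mat_apply0 A).
  apply equiv_trans with (F l); [now apply equiv_sym|].
  apply equiv_trans with (F (0, 0)); [now apply HF | apply HFA].
Qed.

Lemma is_marked_mat_of_zmat M x :
  in_Gamma M -> is_marked x -> is_marked (mat_apply (mat_of_zmat M) x).
Proof.
  rewrite !is_marked_lat. intros HM (m & n & Hm & Hn & Hres).
  exists (za M * m + zb M * n)%Z, (zc M * m + zd M * n)%Z.
  rewrite lat1_mat_of_zmat, lat2_mat_of_zmat. izr.
  split; [|split]; [rewrite <- Hm, <- Hn; ring | rewrite <- Hm, <- Hn; ring|].
  now apply marked_residue_zmat.
Qed.

Lemma affine_aut_of_Gamma M :
  in_Gamma M -> is_affine_aut (mat_apply (mat_of_zmat M)) (mat_of_zmat M).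
Proof.
  intros HM. pose proof HM as [Hu _].
  assert (Hresp : forall N, respects (mat_apply (mat_of_zmat N)))
    by (intros N x y; apply equiv_mat_apply, in_lattice_mat_of_zmat).
  split; [|split; [|split]].
  - split; [apply Hresp | split; [apply quot_continuous_mat_apply|]].
    exists (mat_apply (mat_of_zmat (zinv M))).
    split; [apply Hresp | split; [apply quot_continuous_mat_apply|]].
    split; intros x; [rewrite mat_of_zmat_zinv_apply | rewrite mat_of_zmat_apply_zinv];
      auto using equiv_refl.
  - intros x. split; [|now apply is_marked_mat_of_zmat].
    intros Hm. apply (is_marked_mat_of_zmat (zinv M)) in Hm; [|now apply in_Gamma_inv].
    now rewrite mat_of_zmat_zinv_apply in Hm.
  - rewrite mat_det_of_zmat. destruct Hu as [-> | ->]; simpl; lra.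
  - intros x _. exists 1, (0, 0). split; [lra|]. intros y _.
    apply equiv_sym, equiv_padd_lattice, in_lattice0.
Qed.

Lemma zunimodular_of_mat_det M N :
  mat_det (mat_of_zmat M) * mat_det (mat_of_zmat N) = 1 -> zunimodular M.
Proof.
  rewrite !mat_det_of_zmat, <- mult_IZR. intros H. apply eq_IZR, Z.eq_mul_1 in H.
  unfold zunimodular; lia.
Qed.

Lemma affine_aut_Gamma F A : is_affine_aut F A ->
  exists M, A = mat_of_zmat M /\ in_Gamma M /\ forall x, equiv (F x) (mat_apply A x).
Proof.
  intros [[Hresp [Hcont (G & HGresp & _ & HGF & _)]] [Hmark [Hdet Hloc]]].
  pose proof (locally_affine_global F A Hcont Hloc) as HFt.
  set (t := transl F A (0, 0)) in HFt. clearbody t.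
  pose proof (lattice_preserving_of_equiv F A t Hresp HFt) as HA.
  destruct (lattice_preserving_zmat A (HA _ in_lattice_glue2) (HA _ in_lattice_glue3))
    as [M ->].
  assert (Hmarked : forall x, is_marked x -> is_marked (padd (mat_apply (mat_of_zmat M) x) t))
    by (intros x Hx; apply (is_marked_equiv (F x)); [apply HFt | now apply Hmark]).
  assert (Ht : ~ is_marked t).
  { intro Hm. apply not_is_marked_0, Hmark, (is_marked_equiv t); [|exact Hm].
    specialize (HFt (0, 0)). rewrite mat_apply0 in HFt.
    apply equiv_sym. revert HFt. now destruct t; unfold padd; rewrite !Rplus_0_l. }
  destruct (marked_translation M t (Hmarked _ is_marked_1_0) (Hmarked _ is_marked_m1_0) Ht)
    as [Htlat Hrows].
  assert (HF : forall x, equiv (F x) (mat_apply (mat_of_zmat M) x))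
    by (intros x; apply equiv_trans with (padd (mat_apply (mat_of_zmat M) x) t);
        [apply HFt | now apply equiv_padd_lattice]).
  set (B := mat_inv (mat_of_zmat M)).
  assert (HG : forall y, equiv (G y) (padd (mat_apply B y) (0, 0))).
  { intros y. rewrite <- (mat_apply_mat_inv (mat_of_zmat M) y Hdet) at 1. fold B.
    apply equiv_trans with (G (F (mat_apply B y))).
    - apply HGresp, equiv_sym, HF.
    - apply equiv_trans with (mat_apply B y); [apply HGF|].
      apply equiv_sym, equiv_padd_lattice, in_lattice0. }
  pose proof (lattice_preserving_of_equiv G B (0, 0) HGresp HG) as HB.
  destruct (lattice_preserving_zmat B (HB _ in_lattice_glue2) (HB _ in_lattice_glue3))
    as [N HN].
  exists M. split; [reflexivity | split; [split; [|exact Hrows] | exact HF]].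
  apply (zunimodular_of_mat_det M N). rewrite <- HN. now apply mat_det_mat_inv.
Qed.

Lemma in_Gamma_of_mat_gen A : mat_gen alpha beta gamma A ->
  exists M, A = mat_of_zmat M /\ in_Gamma M.
Proof.
  induction 1 as [| | | |A B _ [M [-> HM]] _ [N [-> HN]] | A B _ [M [-> HM]] HAB HBA].
  - exists zalpha. split; [symmetry; apply mat_of_zalpha | apply in_Gamma_alpha].
  - exists zbeta. split; [symmetry; apply mat_of_zbeta | apply in_Gamma_beta].
  - exists zgamma. split; [symmetry; apply mat_of_zgamma | apply in_Gamma_gamma].
  - exists zI. split; [symmetry; apply mat_of_zmat_I | apply in_Gamma_I].
  - exists (zmul M N). split; [symmetry; apply mat_of_zmat_mul | now apply in_Gamma_mul].
  - exists (zinv M). split; [|now apply in_Gamma_inv].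
    rewrite <- (mat_mulr1 B), <- mat_of_zmat_I, <- (zmulV M) by apply HM.
    now rewrite mat_of_zmat_mul, mat_mulA, HBA, mat_mul1.
Qed.

Lemma aff_gen_of_mat_gen A : mat_gen alpha beta gamma A ->
  aff_gen (mat_apply alpha) (mat_apply beta) (mat_apply gamma) (mat_apply A).
Proof.
  induction 1 as [| | | |A B _ IHA _ IHB | A B _ IHA HAB HBA].
  - apply ag_1.
  - apply ag_2.
  - apply ag_3.
  - apply (ag_eq _ _ _ (fun x => x)); [apply ag_id|].
    intros x. rewrite mat_apply_id. apply equiv_refl.
  - apply (ag_eq _ _ _ (fun x => mat_apply A (mat_apply B x))); [now apply ag_comp|].
    intros x. rewrite mat_apply_mul. apply equiv_refl.
  - apply (ag_inv _ _ _ (mat_apply A)); [exact IHA | |]; intros x;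
      rewrite <- mat_apply_mul; [rewrite HBA | rewrite HAB];
      rewrite mat_apply_id; apply equiv_refl.
Qed.

Theorem mainTheorem2 :
  (forall F A B, is_affine_aut F A -> is_affine_aut F B -> A = B) /\
  (forall F1 F2 A, is_affine_aut F1 A -> is_affine_aut F2 A -> map_eq F1 F2) /\
  (exists Fa Fb Fc,
      is_affine_aut Fa alpha /\ is_affine_aut Fb beta /\ is_affine_aut Fc gamma /\
      forall F A, is_affine_aut F A -> aff_gen Fa Fb Fc F) /\
  (forall A, (exists F, is_affine_aut F A) <-> mat_gen alpha beta gamma A).
Proof.
  assert (Haff : forall A, mat_gen alpha beta gamma A -> is_affine_aut (mat_apply A) A).
  { intros A HA. destruct (in_Gamma_of_mat_gen A HA) as (M & -> & HM).
    now apply affine_aut_of_Gamma. }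
  assert (Hgen : forall F A, is_affine_aut F A -> mat_gen alpha beta gamma A).
  { intros F A HFA. destruct (affine_aut_Gamma F A HFA) as (M & -> & HM & _).
    now apply zgen_of_in_Gamma. }
  split; [|split; [|split]].
  - intros F A B HA HB.
    destruct (affine_aut_Gamma F A HA) as (M & -> & _ & HFA).
    destruct (affine_aut_Gamma F B HB) as (N & -> & _ & HFB).
    f_equal. apply mat_of_zmat_equiv_inj. intros x.
    apply equiv_trans with (F x); [apply equiv_sym|]; auto.
  - intros F1 F2 A H1 H2 x.
    destruct (affine_aut_Gamma _ _ H1) as (M & _ & _ & HF1).
    destruct (affine_aut_Gamma _ _ H2) as (N & _ & _ & HF2).
    apply equiv_trans with (mat_apply A x); [|apply equiv_sym]; auto.
  - exists (mat_apply alpha), (mat_apply beta), (mat_apply gamma).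
    split; [|split; [|split]]; [apply Haff; constructor .. |].
    intros F A HFA. destruct (affine_aut_Gamma F A HFA) as (M & _ & _ & HF).
    apply (ag_eq _ _ _ (mat_apply A)); [now apply aff_gen_of_mat_gen, (Hgen F)|].
    intros x. apply equiv_sym, HF.
  - intros A. split; [intros [F HF]; now apply (Hgen F) | intros HA].
    exists (mat_apply A). now apply Haff.
Qed.
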